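(* Let $m,n$ be positive integers. The poset $\mathbf{P}_{m,n}$ is a ranked poset in which the rank of $(i,j,k)$ equals $m+n-2-i-j+2k$. It has a unique minimal element $(m-1,n-1,0)$, which has rank $0$. The maximal elements are of the form $(i,i,i)$ and have rank $m+n-2$.
   Context: The poset $\mathbf{P}_{m,n}$ has elements the integer triples $(i,j,k)$ with $0\le k\le m-1$, $k\le j\le n-1$, $k\le i\le m-1$, and partial order generated by the covering relations: $(i,j,k)$ covers each of $(i+1,j,k)$, $(i,j+1,k)$, $(i-1,j,k-1)$, $(i,j-1,k-1)$ that is an element of $\mathbf{P}_{m,n}$. *)

From mathcomp Require Import all_boot.
Set Implicit Arguments. Unset Strict Implicit. Unset Printing Implicit Defensive.

Definition triple := (nat * nat * nat)%type.

Definition inP (m n : nat) (x : triple) : bool :=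
  let: (i, j, k) := x in [&& k <= m - 1, k <= j, j <= n - 1, k <= i & i <= m - 1].

Definition gen (m n : nat) (x y : triple) : Prop :=
  inP m n x /\ inP m n y /\
  let: (a, b, c) := x in let: (i, j, k) := y in
  [\/ (a, b, c) = (i.+1, j, k),
      (a, b, c) = (i, j.+1, k),
      [/\ a.+1 = i, b = j & c.+1 = k] |
      [/\ a = i, b.+1 = j & c.+1 = k]].

Inductive Ple (m n : nat) : triple -> triple -> Prop :=
| Ple_refl x : inP m n x -> Ple m n x x
| Ple_step x y z : gen m n x y -> Ple m n y z -> Ple m n x z.

Definition Plt (m n : nat) (x y : triple) : Prop := Ple m n x y /\ x <> y.

Definition Pcovers (m n : nat) (x y : triple) : Prop :=
  Plt m n x y /\ ~ (exists z, inP m n z /\ Plt m n x z /\ Plt m n z y).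

Definition Pminimal (m n : nat) (x : triple) : Prop :=
  inP m n x /\ forall y, inP m n y -> Ple m n y x -> y = x.

Definition Pmaximal (m n : nat) (x : triple) : Prop :=
  inP m n x /\ forall y, inP m n y -> Ple m n x y -> y = x.

(* rank (i,j,k) = m+n-2-i-j+2k  (no truncation occurs on elements of P) *)
Definition rankP (m n : nat) (x : triple) : nat :=
  let: (i, j, k) := x in m + n - 2 - i - j + 2 * k.

From mathcomp Require Import all_boot.
From mathcomp Require Import zify.

Set Implicit Arguments.
Unset Strict Implicit.
Unset Printing Implicit Defensive.

(* Each generating step raises [rankP] by exactly one, so the rank strictly
   increases along every nontrivial chain.  This gives antisymmetry, forces a
   cover to be a single generating step, and makes every element of rank 0
   (resp. m+n-2) minimal (resp. maximal).  Conversely, an element that admits no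
   generating step below it must be (m-1,n-1,0), and one that admits none above
   it must be diagonal. *)

Section RankedPoset.

Variables m n : nat.

Lemma Ple_inP x y : Ple m n x y -> inP m n x /\ inP m n y.
Proof. by elim=> [z hz | a b c [ha _] _ [_ hc]]. Qed.

Lemma rankP_le_top x : inP m n x -> rankP m n x <= m + n - 2.
Proof. by case: x => [[i j] k]; rewrite /inP /rankP => /and5P [? ? ? ? ?]; lia. Qed.

Lemma inP_bottom : inP m n (m - 1, n - 1, 0).
Proof. by rewrite /inP; apply/and5P; split; lia. Qed.

Lemma rankP_bottom : rankP m n (m - 1, n - 1, 0) = 0.
Proof. by rewrite /rankP; lia. Qed.

Lemma rankP_diag i : inP m n (i, i, i) -> rankP m n (i, i, i) = m + n - 2.
Proof. by rewrite /inP /rankP => /and5P [? ? ? ? ?]; lia. Qed.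

Hypotheses (m_gt0 : 0 < m) (n_gt0 : 0 < n).

Lemma rankP_gen x y : gen m n x y -> rankP m n y = (rankP m n x).+1.
Proof.
case: x => [[a b] c]; case: y => [[i j] k].
rewrite /gen /inP /rankP => -[/and5P [? ? ? ? ?] [/and5P [? ? ? ? ?]]].
by case=> [[? ? ?]|[? ? ?]|[? ? ?]|[? ? ?]]; subst; lia.
Qed.

Lemma Ple_rank x y : Ple m n x y -> x = y \/ rankP m n x < rankP m n y.
Proof.
elim=> [z _ | a b c /rankP_gen rab _ [<- | rbc]]; first by left.
  by right; rewrite rab.
by right; rewrite (ltn_trans _ rbc) // rab.
Qed.

Lemma Ple_antisym x y : Ple m n x y -> Ple m n y x -> x = y.
Proof.
move=> /Ple_rank [// | rxy] /Ple_rank [// | ryx].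
by move: (ltn_trans rxy ryx); rewrite ltnn.
Qed.

Lemma Pcovers_gen x y : Pcovers m n x y -> gen m n x y.
Proof.
case=> [[hxy x_neq_y] no_between].
case: hxy x_neq_y no_between => [z _ /(_ erefl) // | a b c gab hbc a_neq_c no_between].
have [[hb _] rab] := (Ple_inP hbc, rankP_gen gab).
case: (Ple_rank hbc) => [<- // | rbc]; case: no_between; exists b.
split=> //; split.
- split=> [|a_eq_b]; first exact: Ple_step gab (Ple_refl hb).
  by move: rab; rewrite a_eq_b => /n_Sn.
- split=> // b_eq_c.
  by move: rbc; rewrite b_eq_c ltnn.
Qed.

Lemma Pminimal_no_gen x y : Pminimal m n x -> ~ gen m n y x.
Proof.
case=> hx minx gyx; have ryx := rankP_gen gyx.
have y_eq_x := minx y (proj1 gyx) (Ple_step gyx (Ple_refl hx)).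
by move: ryx; rewrite y_eq_x => /n_Sn.
Qed.

Lemma Pmaximal_no_gen x y : Pmaximal m n x -> ~ gen m n x y.
Proof.
case=> hx maxx gxy; have rxy := rankP_gen gxy.
have hy := proj1 (proj2 gxy).
have y_eq_x := maxx y hy (Ple_step gxy (Ple_refl hy)).
by move: rxy; rewrite y_eq_x => /n_Sn.
Qed.

Lemma Pminimal_rank0 x : inP m n x -> rankP m n x = 0 -> Pminimal m n x.
Proof.
move=> hx rx0; split=> // y _ /Ple_rank [// | ryx].
by move: ryx; rewrite rx0.
Qed.

Lemma Pmaximal_rank_top x :
  inP m n x -> rankP m n x = m + n - 2 -> Pmaximal m n x.
Proof.
move=> hx rx; split=> // y hy /Ple_rank [// | rxy].
by move: (rankP_le_top hy); rewrite -rx leqNgt rxy.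
Qed.

Lemma no_gen_below_bottom i j k :
  inP m n (i, j, k) -> (forall y, ~ gen m n y (i, j, k)) ->
  (i, j, k) = (m - 1, n - 1, 0).
Proof.
move=> hx no_gen; move: (hx); rewrite /inP => /and5P [? ? ? ? ?].
case: (posnP k) => [k0 | k_gt0]; last first.
  case: (no_gen (i.-1, j, k.-1)); split; last split=> //.
    by rewrite /inP; apply/and5P; split; lia.
  by constructor 3; split; lia.
subst k; case: (ltnP i (m - 1)) => [i_lt | i_ge].
  case: (no_gen (i.+1, j, 0)); split; last split=> //.
    by rewrite /inP; apply/and5P; split; lia.
  by constructor 1.
case: (ltnP j (n - 1)) => [j_lt | j_ge].
  case: (no_gen (i, j.+1, 0)); split; last split=> //.
    by rewrite /inP; apply/and5P; split; lia.
  by constructor 2.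
by congr (_, _, _); lia.
Qed.

Lemma no_gen_above_diag i j k :
  inP m n (i, j, k) -> (forall y, ~ gen m n (i, j, k) y) -> (i, j, k) = (k, k, k).
Proof.
move=> hx no_gen; move: (hx); rewrite /inP => /and5P [? ? ? ? ?].
case: (ltnP k i) => [k_lt_i | i_le_k].
  case: (no_gen (i.-1, j, k)); split=> //; split.
    by rewrite /inP; apply/and5P; split; lia.
  by constructor 1; congr (_, _, _); lia.
case: (ltnP k j) => [k_lt_j | j_le_k].
  case: (no_gen (i, j.-1, k)); split=> //; split.
    by rewrite /inP; apply/and5P; split; lia.
  by constructor 2; congr (_, _, _); lia.
by congr (_, _, _); lia.
Qed.

End RankedPoset.

Theorem proposition3p17 (m n : nat) (hm : 0 < m) (hn : 0 < n) :
  [/\ (* antisymmetry: P_{m,n} is a poset *)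
      (forall x y, inP m n x -> inP m n y -> Ple m n x y -> Ple m n y x -> x = y),
      (* ranked, with rank function rankP: covers raise the rank by one *)
      (forall x y, inP m n x -> inP m n y -> Pcovers m n x y ->
         rankP m n y = (rankP m n x).+1),
      (* unique minimal element (m-1,n-1,0), of rank 0 *)
      (forall x, Pminimal m n x <-> x = (m - 1, n - 1, 0)),
      rankP m n (m - 1, n - 1, 0) = 0 &
      (
      (* maximal elements are exactly those of the form (i,i,i) *)
      (forall x, Pmaximal m n x <-> (inP m n x /\ exists i, x = (i, i, i))) /\
      (* and they have rank m+n-2 *)
      (forall i, inP m n (i, i, i) -> rankP m n (i, i, i) = m + n - 2))].
Proof.
split=> [x y _ _ | x y _ _ /(Pcovers_gen hm hn) /(rankP_gen hm hn) // | [[i j] k] | | ].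
- exact: Ple_antisym.
- split=> [minx | ->].
    by apply: no_gen_below_bottom (proj1 minx) _ => // y; apply: Pminimal_no_gen.
  exact: Pminimal_rank0 (inP_bottom m n) (rankP_bottom m n).
- exact: rankP_bottom.
split=> [x | ]; last exact: rankP_diag.
split=> [maxx | [hx [t x_diag]]]; last first.
  by rewrite x_diag in hx *; exact: Pmaximal_rank_top (rankP_diag hx).
case: x maxx => [[i j] k] maxx.
split; first exact: proj1 maxx.
exists k; apply: no_gen_above_diag (proj1 maxx) _ => // y.
exact: Pmaximal_no_gen.
Qed.
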